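(* Let $f:M\to M$ be a continuous map of a compact metric space and $\{\phi_n\}$ a subadditive sequence of continuous functions with $|\phi_n(x)|/n\le L$ for $\nu$-a.e. $x$, all $n$ and all $\nu\in\mathcal M_f$, for some $L>0$; let $\Phi=\inf_n\phi_n/n$ be its rate of growth. Fix $\epsilon>0$ and, for $N>0$, let $\mathcal M_N=\{\nu\in\mathcal M_f:\int\frac{\phi_n}{n}d\nu<\int\Phi\,d\nu+\epsilon\ \text{for all } n\ge N\}$ and $P_N(\phi)=\sup_{\nu\in\mathcal M_N}\{h(\nu)+\int\phi\,d\nu\}$. Then for every $N>0$, $$\lim_{n\to\infty}P_N\!\left(\frac{\phi_n}{n}\right)=\inf_{n>0}P_N\!\left(\frac{\phi_n}{n}\right).$$
   Context: $\mathcal M_f$ is the set of $f$-invariant Borel probability measures, $h(\nu)$ the metric entropy. Subadditive: $\phi_{n+m}\le\phi_n+\phi_m\circ f^n$. By Kingman's theorem $\Phi=\inf_n\phi_n/n=\lim_n\phi_n/n$ $\nu$-a.e. for every $\nu\in\mathcal M_f$. *)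

From HB Require Import structures.
From mathcomp Require Import all_boot all_order all_algebra.
From mathcomp Require Import all_classical all_reals all_analysis.
Set Implicit Arguments. Unset Strict Implicit. Unset Printing Implicit Defensive.
Import Order.TTheory GRing.Theory Num.Theory.
Import numFieldNormedType.Exports.
Local Open Scope classical_set_scope.
Local Open Scope ring_scope.

Section Defs.
Variables (R : realType) (M : pseudoPMetricType R).

Definition BM := g_sigma_algebraType (@open M).

Definition f_invariant (f : M -> M) (nu : probability BM R) : Prop :=
  forall A : set BM, measurable A -> nu (f @^-1` A) = nu A.

Definition is_mpart (k : nat) (A : 'I_k -> set BM) : Prop :=
  [/\ (forall i, measurable (A i)), trivIset setT A & \bigcup_i A i = setT].

Definition eta (t : R) : R := - (t * ln t).

(* H_nu( xi v f^-1 xi v ... v f^-(n-1) xi ), cells indexed by words w *)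
Definition Hjoin (nu : probability BM R) (f : M -> M) (k : nat)
  (A : 'I_k -> set BM) (n : nat) : R :=
  \sum_(w : {ffun 'I_n -> 'I_k})
     eta (fine (nu [set x : BM | forall i : 'I_n, A (w i) (iter i f x)])).

Definition hpart (nu : probability BM R) (f : M -> M) (k : nat)
  (A : 'I_k -> set BM) : R :=
  limn (fun n => Hjoin nu f A n / n%:R).

Definition KSentropy (f : M -> M) (nu : probability BM R) : \bar R :=
  ereal_sup [set e | exists k (A : 'I_k -> set BM),
                       is_mpart A /\ e = (hpart nu f A)%:E].

Definition rate (phi : nat -> M -> R) (x : M) : \bar R :=
  ereal_inf [set (phi n x / n%:R)%:E | n in [set n | (0 < n)%N]].

Definition MN (f : M -> M) (phi : nat -> M -> R) (eps : R) (N : nat)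
  : set (probability BM R) :=
  [set nu | f_invariant f nu /\
     forall n, (N <= n)%N ->
       (\int[nu]_x (phi n x / n%:R)%:E < \int[nu]_x rate phi x + eps%:E)%E].

Definition PN (f : M -> M) (phi : nat -> M -> R) (eps : R) (N : nat)
  (psi : M -> R) : \bar R :=
  ereal_sup [set (KSentropy f nu + \int[nu]_x (psi x)%:E)%E
            | nu in MN f phi eps N].

End Defs.

From HB Require Import structures.
From mathcomp Require Import all_boot all_order all_algebra.
From mathcomp Require Import all_classical all_reals all_analysis.
From mathcomp Require Import measurable_realfun ring lra.
Import Order.TTheory GRing.Theory Num.Theory.
Import numFieldNormedType.Exports.
Local Open Scope classical_set_scope.
Local Open Scope ring_scope.

(* For an invariant measure nu, a_k := \int phi_k dnu is a subadditive real
   sequence with |a_k| <= sup |phi_k|, a bound not depending on nu.  Writing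
   m = q n + r, subadditivity gives a_m / m <= a_n / n + 2 K_n / m, where K_n
   bounds |phi_k| for 0 < k <= n; hence, uniformly over M_N,
   P_N(phi_m / m) <= P_N(phi_n / n) + 2 K_n / m, the entropy term being the
   same on both sides.  An extended-real sequence with u_m <= u_n + c_n / m
   converges to its infimum. *)

Section Subadditive.
Context {R : realType}.
Variable a : nat -> R.
Hypothesis a_sub : forall n m, (0 < n)%N -> (0 < m)%N -> a (n + m)%N <= a n + a m.

Lemma subadditive_mul_le n q : (0 < n)%N -> a (q.+1 * n)%N <= q.+1%:R * a n.
Proof.
move=> n0; elim: q => [|q IHq]; first by rewrite mul1n mul1r.
rewrite mulSn (le_trans (a_sub _ _ n0 _)) ?muln_gt0 ?n0 //.
by rewrite -[q.+2]add1n natrD mulrDl mul1r lerD2l.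
Qed.

Lemma subadditive_div_le (K : R) n m : (0 < n)%N -> (n <= m)%N ->
  (forall k, (0 < k)%N -> (k <= n)%N -> `|a k| <= K) ->
  a m / m%:R <= a n / n%:R + 2 * K / m%:R.
Proof.
move=> n0 nm aK.
have m0 : (0 < m%:R :> R) by rewrite ltr0n (leq_trans n0).
have n0R : (0 < n%:R :> R) by rewrite ltr0n.
have [q0 r_lt] : (0 < m %/ n)%N /\ (m %% n < n)%N by rewrite divn_gt0 // ltn_mod.
have K0 : 0 <= K := le_trans (normr_ge0 _) (aK n n0 (leqnn n)).
have am_le : a m <= (m %/ n)%:R * a n + K.
  have aqn : a (m %/ n * n)%N <= (m %/ n)%:R * a n.
    by rewrite -(prednK q0) subadditive_mul_le.
  rewrite {1}(divn_eq m n); have [->|r0] := posnP (m %% n).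
    by rewrite addn0 (le_trans aqn) // lerDl.
  apply: le_trans (a_sub _ _ _ r0) _; first by rewrite muln_gt0 q0.
  by rewrite lerD // (le_trans (ler_norm _)) // aK // ltnW.
set t := a n / n%:R.
have an_t : a n = t * n%:R by rewrite divfK ?gt_eqF.
have mE : m%:R = (m %/ n)%:R * n%:R + (m %% n)%:R :> R.
  by rewrite {1}(divn_eq m n) natrD natrM.
have rt_ge : - K <= (m %% n)%:R * t.
  have [t0|t0] := leP 0 t.
    by rewrite (le_trans _ (mulr_ge0 (ler0n _ _) t0)) // oppr_le0.
  have : - K <= a n by have := aK n n0 (leqnn n); rewrite ler_norml => /andP[].
  rewrite an_t => /le_trans; apply; rewrite [_ * t]mulrC.
  by apply: (ler_wnM2l (ltW t0)); rewrite ler_nat ltnW.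
rewrite ler_pdivrMr // mulrDl divfK ?gt_eqF //.
have -> : t * m%:R = (m %/ n)%:R * a n + (m %% n)%:R * t.
  by rewrite an_t mE; ring.
lra.
Qed.

End Subadditive.

Section SequenceLimits.
Context {R : realType}.

Lemma near_infty_div_le (c e : R) : 0 < e -> \forall m \near \oo, c / m.+1%:R <= e.
Proof.
move=> e0.
have : c * harmonic m @[m --> \oo] --> c * 0 by apply: cvgMl_tmp; exact: cvg_harmonic.
move=> /cvgrPdist_le /(_ e e0).
apply: filterS => m; rewrite mulr0 sub0r normrN /= => /(le_trans (ler_norm _)).
by rewrite mulrC.
Qed.

Local Open Scope ereal_scope.

Lemma le_add_div_cvg_ereal_inf (u : nat -> \bar R) :
  (forall n, (0 < n)%N -> exists c : R, forall m, (n <= m)%N ->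
     u m <= u n + (c / m%:R)%:E) ->
  (fun n => u n.+1) @ \oo --> ereal_inf [set u n | n in [set n | (0 < n)%N]].
Proof.
move=> u_le; apply: limn_esup_le_cvg => [|m].
  2: by apply: ereal_inf_lbound; exists m.+1.
apply: le_ereal_inf_tmp => _ [n n0 <-]; apply/lee_addgt0Pr => e e0.
have [c u_le_n] := u_le n n0.
set V := [set m | (n <= m.+1)%N /\ (c / m.+1%:R <= e)%R].
have V_oo : \forall m \near \oo, V m.
  near=> m; split; last by near: m; exact: near_infty_div_le.
  by near: m; exists n => // m /= /leqW.
rewrite /limn_esup limf_esupE.
apply: le_trans (ereal_inf_lbound _) _; first by exists V.
apply: ge_ereal_sup => _ [m [nm cm] <-].
by apply: le_trans (u_le_n _ nm) _; rewrite leeD2l // lee_fin.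
Unshelve. all: by end_near.
Qed.

End SequenceLimits.

Section ContinuousIntegrals.
Context {R : realType} {M : pseudoPMetricType R}.

Lemma continuous_measurable_fun (g : M -> R) : continuous g ->
  measurable_fun [set: BM M] (g : BM M -> R).
Proof.
move=> /continuousP g_open.
apply: (measurability _ (RGenOpens.measurableE R)) => _ [_ [a [b ->]] <-].
by rewrite setTI; apply: sub_sigma_algebra; apply: g_open; exact: interval_open.
Qed.

Lemma continuous_measurable_map (f : M -> M) : continuous f ->
  measurable_fun [set: BM M] (f : BM M -> BM M).
Proof.
move=> /continuousP f_open.
apply: (@measurability _ _ (BM M) (BM M) setT f (@open M)) => // _ [A oA <-].
by rewrite setTI; apply: sub_sigma_algebra; exact: f_open.
Qed.

Lemma continuous_iter (f : M -> M) j : continuous f -> continuous (iter j f).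
Proof.
move=> cf; elim: j => [|j IHj] x; first exact: cvg_id.
exact: (continuous_comp (IHj x) (cf _)).
Qed.

Hypothesis cM : compact [set: M].

Lemma continuous_bounded (g : M -> R) : continuous g ->
  exists B : R, forall x, `|g x| <= B.
Proof.
move=> cg; have : compact [set g x | x in [set: M]].
  by apply: continuous_compact => //; exact: continuous_subspaceT.
move=> /compact_bounded[B [_ gB]]; exists (`|B| + 1) => x.
by apply: gB; [rewrite (le_lt_trans (ler_norm B)) // ltrDl | exists x].
Qed.

Lemma continuous_family_bounded (g : nat -> M -> R) n :
  (forall k, (0 < k)%N -> continuous (g k)) ->
  exists K : R, forall k, (0 < k)%N -> (k <= n)%N -> forall x, `|g k x| <= K.
Proof.
move=> cg; elim: n => [|n [K gK]]; first by exists 0 => -[].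
have [B gB] := continuous_bounded _ (cg n.+1 (ltn0Sn n)).
exists (Num.max K B) => k k0; rewrite leq_eqVlt ltnS => /orP[/eqP-> x|kn x].
  by rewrite le_max gB orbT.
by rewrite le_max gK.
Qed.

Variable nu : probability (BM M) R.

Lemma continuous_integrable (g : M -> R) : continuous g ->
  nu.-integrable [set: BM M] (EFin \o (g : BM M -> R)).
Proof.
move=> cg; have [B gB] := continuous_bounded _ cg.
apply: measurable_bounded_integrable => //.
- by rewrite (le_lt_trans (probability_le1 _ measurableT)) ?ltry.
- exact: continuous_measurable_fun.
- exists B; split; first exact: num_real.
  by move=> C BC x _ /=; rewrite (le_trans (gB x)) ?ltW.
Qed.

Definition mean (g : M -> R) : R := fine (\int[nu]_x (g x)%:E).

Lemma integral_mean (g : M -> R) : continuous g ->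
  (\int[nu]_x (g x)%:E = (mean g)%:E)%E.
Proof.
by move=> cg; rewrite fineK // integrable_fin_num // continuous_integrable.
Qed.

Lemma mean_le (g h : M -> R) : continuous g -> continuous h ->
  (forall x, g x <= h x) -> mean g <= mean h.
Proof.
move=> cg ch gh; rewrite -lee_fin -!integral_mean //.
by apply: le_integral => // [||x _]; rewrite ?continuous_integrable ?lee_fin.
Qed.

Lemma meanD (g h : M -> R) : continuous g -> continuous h ->
  mean (g \+ h) = mean g + mean h.
Proof.
move=> cg ch; apply: EFin_inj; rewrite EFinD -!integral_mean //.
- by rewrite -integralD ?continuous_integrable.
- by move=> x; apply: continuousD; [exact: cg | exact: ch].
Qed.

Lemma mean_cst (c : R) : mean (cst c) = c.
Proof.
by rewrite /mean /= integral_cst //= probability_setT mule1.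
Qed.

Lemma mean_norm_le (g : M -> R) (B : R) : continuous g ->
  (forall x, `|g x| <= B) -> `|mean g| <= B.
Proof.
move=> cg gB; have cB : continuous (cst B : M -> R) by move=> x; exact: cvg_cst.
have cNB : continuous (cst (- B) : M -> R) by move=> x; exact: cvg_cst.
have gB' x : - B <= g x <= B by rewrite -ler_norml.
rewrite ler_norml; apply/andP; split.
- by rewrite -[X in X <= _]mean_cst; apply: mean_le => // x; case/andP: (gB' x).
- by rewrite -[X in _ <= X]mean_cst; apply: mean_le => // x; case/andP: (gB' x).
Qed.

Lemma integral_divr (g : M -> R) (r : R) : continuous g ->
  (\int[nu]_x (g x / r)%:E = (mean g / r)%:E)%E.
Proof.
move=> cg; under eq_integral do rewrite EFinM muleC.
by rewrite integralZl ?continuous_integrable // integral_mean // -EFinM mulrC.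
Qed.

Context {f : M -> M}.
Hypotheses (cf : continuous f) (f_inv : f_invariant f nu).

Lemma integral_comp_invariant (g : M -> R) : continuous g ->
  (\int[nu]_x (g (f x))%:E = \int[nu]_x (g x)%:E)%E.
Proof.
move=> cg; have mf := continuous_measurable_map _ cf.
have mg := (measurable_EFinP _ _).2 (continuous_measurable_fun _ cg).
have gf_int : nu.-integrable (f @^-1` [set: BM M]) (EFin \o (g : BM M -> R) \o f).
  rewrite preimage_setT; apply: (continuous_integrable (g \o f)) => x.
  exact: continuous_comp (cf x) (cg _).
rewrite -[LHS]/(\int[nu]_x ((EFin \o g) \o f) x)%E.
rewrite -(integral_pushforward mf mg gf_int measurableT) ?preimage_setT.
by apply: eq_measure_integral => A mA _; exact: f_inv.
Qed.

Lemma mean_comp_iter (g : M -> R) j : continuous g ->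
  mean (g \o iter j f) = mean g.
Proof.
move=> cg; elim: j => [//|j <-].
have -> : g \o iter j.+1 f = (g \o iter j f) \o f.
  by apply: funext => x; rewrite /= -iterSr.
rewrite /mean integral_comp_invariant // => x.
exact: continuous_comp (continuous_iter _ j cf x) (cg _).
Qed.

Lemma mean_subadditive (phi : nat -> M -> R) :
  (forall n, (0 < n)%N -> continuous (phi n)) ->
  (forall n m, (0 < n)%N -> (0 < m)%N ->
     forall x, phi (n + m)%N x <= phi n x + phi m (iter n f x)) ->
  forall n m, (0 < n)%N -> (0 < m)%N ->
    mean (phi (n + m)%N) <= mean (phi n) + mean (phi m).
Proof.
move=> cphi phi_sub n m n0 m0.
have cphim : continuous (phi m \o iter n f).
  by move=> x; exact: continuous_comp (continuous_iter _ n cf x) (cphi m m0 _).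
rewrite -(mean_comp_iter _ n (cphi m m0)) -meanD //; last exact: cphi n n0.
apply: mean_le => [||x]; last exact: phi_sub.
- by apply: cphi; rewrite addn_gt0 n0.
- by move=> x; apply: continuousD; [exact: cphi | exact: cphim].
Qed.

End ContinuousIntegrals.

Theorem lemma6p2 (R : realType) (M : pseudoPMetricType R) (f : M -> M)
  (phi : nat -> M -> R) (L eps : R) :
  hausdorff_space M -> compact [set: M] -> continuous f ->
  (forall n, (0 < n)%N -> continuous (phi n)) ->
  (forall n m, (0 < n)%N -> (0 < m)%N ->
     forall x, phi (n + m)%N x <= phi n x + phi m (iter n f x)) ->
  0 < L ->
  (forall nu : probability (BM M) R, f_invariant f nu ->
     forall n, (0 < n)%N -> {ae nu, forall x : BM M, `|phi n x| / n%:R <= L}) ->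
  0 < eps ->
  forall N : nat, (0 < N)%N ->
    (fun n => PN f phi eps N (fun x => phi n.+1 x / n.+1%:R)) @ \oo -->
      ereal_inf [set PN f phi eps N (fun x => phi n x / n%:R)
                | n in [set n | (0 < n)%N]].
Proof.
(* Continuity on the compact space already bounds every phi_n. *)
move=> _ cM cf cphi phi_sub _ _ _ N _.
apply: le_add_div_cvg_ereal_inf => n n0.
have [K phiK] := continuous_family_bounded cM _ n cphi.
exists (2 * K) => m nm; have m0 := leq_trans n0 nm.
apply: ge_ereal_sup => _ [nu nu_MN <-]; have [f_inv _] := nu_MN.
rewrite integral_divr //; last exact: cphi m m0.
apply: (@le_trans _ _ (KSentropy f nu + (mean nu (phi n) / n%:R)%:E
                         + (2 * K / m%:R)%:E)%E).
  rewrite -addeA -EFinD leeD2l // lee_fin.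
  have mean_sub := mean_subadditive cM nu cf f_inv _ cphi phi_sub.
  apply: (@subadditive_div_le _ (fun k => mean nu (phi k)) mean_sub) => // k k0 kn.
  by apply: (mean_norm_le cM) => [|x]; [exact: cphi | exact: phiK].
rewrite leeD2r //; apply: ereal_sup_ubound; exists nu => //.
by rewrite integral_divr //; exact: cphi n n0.
Qed.
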